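(* Let $\phi:(\mathcal S,E)\to(\mathcal S',E')$ be an isomorphism of information structures, let $Q$ and $Q'$ be adapted probability functors on $\mathcal S$ and $\mathcal S'$, and suppose $Q'_{\phi(X)}=m_X(Q_X)$ for every $X\in\mathrm{Ob}\,\mathcal S$. Then for every $\alpha>0$ the induced map $\phi^*:H^\bullet(\mathcal S',F_\alpha(Q'))\to H^\bullet(\mathcal S,F_\alpha(Q))$, given on cochains by $(\phi^*f)_Y[X_1|\dots|X_n](P)=f_{\phi(Y)}[\phi(X_1)|\dots|\phi(X_n)](m_Y(P))$, is an isomorphism.
   Context: An information structure is a pair $(\mathcal S,E)$ with $\mathcal S$ a small poset category with terminal object $\mathbf 1$ and finite-dimensional nerve, in which $XY:=X\wedge Y$ exists whenever $X,Y$ have a common refinement, and $E:\mathcal S\to\mathcal{Sets}$ a functor with $E(\mathbf 1)$ a singleton, $E(\pi)$ a strict surjection for non-identity $\pi$, $|E(\pi)^{-1}(x)\cap E(\sigma)^{-1}(y)|\le1$ for product diagrams $X\xleftarrow{\pi}X\wedge Y\xrightarrow{\sigma}Y$, and every $x\in E(X)$ the $X$-component of some element of $\lim E$. A morphism $\phi=(\phi_0,\phi^\#)$ is a functor $\phi_0$ (written $\phi$) preserving $\mathbf 1$ and existing products, with a natural transformation $\phi^\#:E\Rightarrow E'\circ\phi_0$ with surjective components; composition is componentwise, and an isomorphism is a morphism with a two-sided inverse. $\mathcal S_X=\{Y:X\to Y\}$. A probability functor $Q$ gives simplicial subcomplexes $Q_X$ of the simplex $\Delta(X)$ of laws on $E(X)$,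 with marginalization $\pi_*P(y)=\sum_{x\in E(\pi)^{-1}(y)}P(x)$; $Q$ adapted means stable under conditioning $P|_{Y=y}$ ($P|_{Y=y}(x)=P(x)/\pi_*P(y)$ if $E(\pi)(x)=y$, else $0$). $m_X(P)(x')=\sum_{x\in(\phi^\#_X)^{-1}(x')}P(x)$. $F_\alpha(Q_X)$: measurable functions on $Q_X$ with action $(Y.f)(P)=\sum_yP(Y=y)^\alpha f(P|_{Y=y})$. Cochains: families $f_X[X_1|\dots|X_n]$ of measurable functions on $Q_X$, $X_i\in\mathcal S_X$, jointly local ($f_X[\dots](P)=f_Y[\dots](\pi_*P)$ for $\pi:X\to Y$, $X_i\in\mathcal S_Y$), with coboundary $(\delta f)[X_1|\dots|X_{n+1}]=X_1.f[X_2|\dots|X_{n+1}]+\sum_{k=1}^n(-1)^kf[X_1|\dots|X_kX_{k+1}|\dots|X_{n+1}]+(-1)^{n+1}f[X_1|\dots|X_n]$; $H^\bullet(\mathcal S,F_\alpha(Q))$ is its cohomology (equal to $\mathrm{Ext}^\bullet(\mathbb R_{\mathcal S},F_\alpha(Q))$). *)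

From HB Require Import structures.
From mathcomp Require Import all_boot all_order all_algebra.
From mathcomp Require Import all_classical all_reals all_analysis.
Set Implicit Arguments. Unset Strict Implicit. Unset Printing Implicit Defensive.
Import Order.TTheory GRing.Theory Num.Theory.
Local Open Scope classical_set_scope.
Local Open Scope ring_scope.

(* A poset category S is given by its objects [Obj] and the (Prop-valued) *)
(* relation [arr X Y] = "there is a (necessarily unique) arrow X -> Y".   *)

(* strict chains X_0 -> X_1 -> ... -> X_k of non-identity arrows
   (= non-degenerate simplices of the nerve) *)
Fixpoint strict_chain (T : Type) (r : T -> T -> Prop) (s : seq T) : Prop :=
  match s with
  | x :: ((y :: _) as t) => r x y /\ x <> y /\ strict_chain r t
  | _ => True
  end.

Record infostr : Type := InfoStr {
  Obj : Type;
  arr : Obj -> Obj -> Prop;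
  arr_refl : forall X, arr X X;
  arr_trans : forall X Y Z, arr X Y -> arr Y Z -> arr X Z;
  arr_antisym : forall X Y, arr X Y -> arr Y X -> X = Y;
  one : Obj;
  arr_one : forall X, arr X one;
  nerve_fin : exists N : nat, forall s, strict_chain arr s -> (size s <= N)%N;
  (* the product X /\ Y (meaningful when X, Y have a common refinement) *)
  meet : Obj -> Obj -> Obj;
  meet_spec : forall X Y, (exists Z, arr Z X /\ arr Z Y) ->
      [/\ arr (meet X Y) X, arr (meet X Y) Y &
          forall W, arr W X -> arr W Y -> arr W (meet X Y)];
  E : Obj -> finType;
  Emap : forall X Y, arr X Y -> E X -> E Y;
  Emap_id : forall X (p : arr X X) (x : E X), Emap p x = x;
  Emap_comp : forall X Y Z (p : arr X Y) (q : arr Y Z) (r : arr X Z) (x : E X),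
      Emap r x = Emap q (Emap p x);
  E_one : #|E one| = 1%N;
  Emap_strict : forall X Y (p : arr X Y), X <> Y ->
      (forall y, exists x, Emap p x = y) /\ ~ injective (Emap p);
  E_prod : forall X Y, (exists Z, arr Z X /\ arr Z Y) ->
      forall (p : arr (meet X Y) X) (q : arr (meet X Y) Y) (z1 z2 : E (meet X Y)),
      Emap p z1 = Emap p z2 -> Emap q z1 = Emap q z2 -> z1 = z2;
  E_lim : forall X (x : E X), exists s : forall Y, E Y,
      (forall Y Z (p : arr Y Z), Emap p (s Y) = s Z) /\ s X = x
}.

Arguments one : clear implicits.
Arguments E : clear implicits.

Definition compat (S : infostr) (X Y : Obj S) := exists Z, arr Z X /\ arr Z Y.

Definition is_morphism (S S' : infostr) (f : Obj S -> Obj S')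
    (fs : forall X, E S X -> E S' (f X)) : Prop :=
  [/\ (forall X Y, arr X Y -> arr (f X) (f Y)),
      f (one S) = one S',
      (forall X Y, compat X Y -> f (meet X Y) = meet (f X) (f Y)),
      (forall X (x' : E S' (f X)), exists x, fs X x = x') &
      (forall X Y (p : arr X Y) (p' : arr (f X) (f Y)) (x : E S X),
          Emap p' (fs X x) = fs Y (Emap p x))].

(* isomorphisms: morphisms with a two-sided inverse (composition is
   componentwise; the sharp components are compared along the equality
   of objects g (f X) = X) *)
Definition is_iso (S S' : infostr) (f : Obj S -> Obj S')
    (fs : forall X, E S X -> E S' (f X)) : Prop :=
  is_morphism fs /\
  exists (g : Obj S' -> Obj S) (gs : forall X', E S' X' -> E S (g X')),
    is_morphism gs /\
    exists (H1 : forall X, g (f X) = X) (H2 : forall X', f (g X') = X'),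
      (forall X (x : E S X),
          eq_rect _ (fun Z => (E S Z : Type)) (gs (f X) (fs X x)) X (H1 X) = x) /\
      (forall X' (x' : E S' X'),
          eq_rect _ (fun Z => (E S' Z : Type)) (fs (g X') (gs X' x')) X' (H2 X') = x').

Section Prob.
Local Unset Implicit Arguments.
Variable R : realType.

Definition is_law {T : finType} (P : T -> R) : Prop :=
  (forall x, 0 <= P x) /\ \sum_(x : T) P x = 1.

Variable S : infostr.

Definition marg {X Y : Obj S} (p : arr X Y) (P : E S X -> R) (y : E S Y) : R :=
  \sum_(x : E S X | Emap p x == y) P x.

Definition cond {X Y : Obj S} (p : arr X Y) (P : E S X -> R) (y : E S Y)
    (x : E S X) : R :=
  if Emap p x == y then P x / marg p P y else 0.

(* Q_X is a simplicial subcomplex of Delta(X) (a union of closed faces),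
   and Q is functorial for marginalization *)
Definition prob_functor (Q : forall X : Obj S, set (E S X -> R)) : Prop :=
  [/\ (forall X P, Q X P -> is_law P),
      (forall X (P P' : E S X -> R), Q X P -> is_law P' ->
          (forall x, P x = 0 -> P' x = 0) -> Q X P') &
      (forall X Y (p : arr X Y) P, Q X P -> Q Y (marg p P))].

Definition adapted (Q : forall X : Obj S, set (E S X -> R)) : Prop :=
  forall X Y (p : arr X Y) P y, Q X P -> 0 < marg p P y -> Q X (cond p P y).

(* Borel sigma-algebra on R^T (T finite): generated by the coordinates *)
Definition coord_sets (T : finType) : set (set (T -> R)) :=
  [set A | exists (x : T) (B : set R), measurable B /\
           A = (fun P : T -> R => P x) @^-1` B].

Definition meas_on {T : finType} (Q : set (T -> R)) (f : (T -> R) -> R) : Prop :=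
  forall B : set R, measurable B -> <<s coord_sets T >> (Q `&` f @^-1` B).

(* A cochain is a family f X [X_1|...|X_n] P; only the values with        *)
(* X_i in S_X, size = n, P in Q_X matter.                                 *)
Definition cochain := forall X : Obj S, seq (Obj S) -> (E S X -> R) -> R.

Variable Q : forall X : Obj S, set (E S X -> R).
Variable alpha : R.

Definition dom (n : nat) (X : Obj S) (xs : seq (Obj S)) : Prop :=
  size xs = n /\ forall i, (i < size xs)%N -> arr X (nth (one S) xs i).

Definition is_cochain (n : nat) (f : cochain) : Prop :=
  (forall X xs, dom n X xs -> meas_on (Q X) (f X xs)) /\
  (forall X Y (p : arr X Y) xs, dom n Y xs ->
      forall P, Q X P -> f X xs P = f Y xs (marg p P)).

Definition act (X Y : Obj S) (g : (E S X -> R) -> R) (P : E S X -> R) : R :=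
  match pselect (arr X Y) with
  | left p => \sum_(y : E S Y) (marg p P y) `^ alpha * g (cond p P y)
  | right _ => 0
  end.

(* [X_1|...|X_k X_{k+1}|...] with 0-based k *)
Definition merge_at (k : nat) (xs : seq (Obj S)) : seq (Obj S) :=
  take k xs ++ meet (nth (one S) xs k) (nth (one S) xs k.+1) :: drop k.+2 xs.

Definition delta (n : nat) (f : cochain) : cochain :=
  fun X xs P =>
    act X (head (one S) xs) (f X (behead xs)) P
    + \sum_(k < n) (-1) ^+ k.+1 * f X (merge_at k xs) P
    + (-1) ^+ n.+1 * f X (take n xs) P.

Definition is_cocycle (n : nat) (f : cochain) : Prop :=
  is_cochain n f /\
  forall X xs, dom n.+1 X xs -> forall P, Q X P -> delta n f X xs P = 0.

Definition is_coboundary (n : nat) (h : cochain) : Prop :=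
  match n with
  | 0 => forall X xs, dom 0 X xs -> forall P, Q X P -> h X xs P = 0
  | m.+1 => exists g, is_cochain m g /\
      forall X xs, dom n X xs -> forall P, Q X P -> h X xs P = delta m g X xs P
  end.

End Prob.
Arguments marg {R S X Y}.
Arguments cond {R S X Y}.
Arguments prob_functor {R S}.
Arguments adapted {R S}.
Arguments cochain : clear implicits.
Arguments dom {S}.
Arguments is_cochain {R S}.
Arguments act {R S} alpha {X} Y.
Arguments merge_at {S}.
Arguments delta {R S} alpha n f.
Arguments is_cocycle {R S}.
Arguments is_coboundary {R S}.

Definition mpush (R : realType) (S S' : infostr) (f : Obj S -> Obj S')
    (fs : forall X, E S X -> E S' (f X)) (X : Obj S) (P : E S X -> R)
    (x' : E S' (f X)) : R :=
  \sum_(x : E S X | fs X x == x') P x.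

Definition pullback (R : realType) (S S' : infostr) (f : Obj S -> Obj S')
    (fs : forall X, E S X -> E S' (f X)) (c : cochain R S') : cochain R S :=
  fun Y xs P => c (f Y) (map f xs) (mpush fs (X:=Y) P).

Definition csub (R : realType) (S : infostr) (c d : cochain R S) : cochain R S :=
  fun X xs P => c X xs P - d X xs P.

(* An isomorphism of information structures has bijective sharp components, so
   each m_X is a bijection from Q_X onto Q'_{phi X} that commutes with
   marginalization and conditioning.  Hence phi^* commutes with the coboundary
   and preserves measurability and locality: it maps cocycles to cocycles and
   coboundaries to coboundaries.  The same holds for the inverse psi, and
   phi^* psi^* = id, psi^* phi^* = id already on cochains, so phi^* is bijective
   in cohomology. *)
From Pilot Require Import Defs.
From HB Require Import structures.
From mathcomp Require Import all_boot all_order all_algebra.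
From mathcomp Require Import all_classical all_reals all_analysis.
Import Order.TTheory GRing.Theory Num.Theory.
Local Open Scope classical_set_scope.
Local Open Scope ring_scope.

Lemma sum_preim_comp {V : nmodType} {A B C : finType} (f : A -> B) (g : B -> C)
    (F : A -> V) (z : C) :
  \sum_(b | g b == z) \sum_(a | f a == b) F a = \sum_(a | g (f a) == z) F a.
Proof.
rewrite [RHS](partition_big f (fun b => g b == z)) //.
apply: eq_bigr => b /eqP gbz; apply: eq_bigl => a.
by case: (f a =P b) => [->|]; rewrite ?gbz ?eqxx ?andbF.
Qed.

Lemma inj_surj_bij {A B : Type} {h : A -> B} :
  injective h -> (forall b, exists a, h a = b) -> bijective h.
Proof. by move=> h_inj /choice[k hK]; exists k => // a; apply: h_inj. Qed.

Lemma coord_sigma_preimage {R : realType} {T T' : finType}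
    {m : (T -> R) -> T' -> R} :
  (forall x', exists x, forall P, m P x' = P x) ->
  forall {A}, <<s coord_sets R T' >> A -> <<s coord_sets R T >> (m @^-1` A).
Proof.
move=> m_coord; apply: smallest_sub; first split.
- by rewrite /= preimage_set0; exact: sigma_algebra0.
- by move=> A mA; rewrite /= setTD preimage_setC -setTD; exact: sigma_algebraCD.
- by move=> F mF; rewrite /= preimage_bigcup; exact: sigma_algebra_bigcup.
move=> _ [x' [B [mB ->]]]; have [x mx] := m_coord x'.
apply: sub_sigma_algebra; exists x, B; split => //.
by apply/seteqP; split => P /=; rewrite mx.
Qed.

Lemma dom_map {S S' : infostr} {f : Obj S -> Obj S'} :
    (forall X Y, arr X Y -> arr (f X) (f Y)) ->
  forall {n X xs}, dom n X xs -> dom n (f X) (map f xs).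
Proof.
move=> f_arr n X xs [sz arr_xs]; split; first by rewrite size_map.
move=> i; rewrite size_map => i_lt; rewrite (nth_map (Defs.one S)) //.
exact/f_arr/arr_xs.
Qed.

Lemma merge_at_map {S S' : infostr} {f : Obj S -> Obj S'} :
    (forall X Y, compat X Y -> f (meet X Y) = meet (f X) (f Y)) ->
  forall {n X xs} k, dom n X xs -> (k.+1 < n)%N ->
  map f (merge_at k xs) = merge_at k (map f xs).
Proof.
move=> f_meet n X xs k [<- arr_xs] k_lt; have k_lt' := ltnW k_lt.
rewrite /merge_at map_cat map_take /= map_drop.
rewrite (nth_map (Defs.one S) _ _ k_lt') (nth_map (Defs.one S) _ _ k_lt) f_meet //.
by exists X; split; apply: arr_xs.
Qed.

Section Pushforward.
Context {R : realType} {S S' : infostr} {f : Obj S -> Obj S'}.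
Context {fs : forall X, E S X -> E S' (f X)}.

Lemma mpushE {X} (P : E S X -> R) x :
  injective (fs X) -> mpush fs P (fs X x) = P x.
Proof.
move=> fs_inj; rewrite /mpush (eq_bigl (pred1 x)) ?big_pred1_eq // => y.
by rewrite /= (inj_eq fs_inj).
Qed.

Lemma mpush_inj {X} : injective (fs X) -> injective (@mpush R _ _ _ fs X).
Proof.
move=> fs_inj P P' eqP; apply: funext => x.
by rewrite -(mpushE P x fs_inj) -(mpushE P' x fs_inj) eqP.
Qed.

Lemma in_image_mpush {X} {A : set (E S X -> R)} {B : set (E S' (f X) -> R)} :
  injective (fs X) -> B = @mpush R _ _ _ fs X @` A ->
  forall P, A P <-> B (mpush fs P).
Proof.
move=> fs_inj -> P; split; first by exists P.
by case=> P' AP' /(mpush_inj fs_inj) <-.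
Qed.

Context {X Y : Obj S} {p : arr X Y} {p' : arr (f X) (f Y)}.
Hypothesis fs_natural : forall x, Emap p' (fs X x) = fs Y (Emap p x).

Lemma marg_mpush (P : E S X -> R) : marg p' (mpush fs P) = mpush fs (marg p P).
Proof.
apply: funext => y'; rewrite /marg /mpush !sum_preim_comp.
by apply: eq_bigl => x; rewrite fs_natural.
Qed.

Lemma cond_mpush (P : E S X -> R) y :
  injective (fs X) -> injective (fs Y) -> (forall x', exists x, fs X x = x') ->
  cond p' (mpush fs P) (fs Y y) = mpush fs (cond p P y).
Proof.
move=> fsX_inj fsY_inj fs_surj; apply: funext => x'.
have [x <-] := fs_surj x'.
by rewrite mpushE // /cond fs_natural (inj_eq fsY_inj) mpushE // marg_mpush mpushE.
Qed.

End Pushforward.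

Section Roundtrip.
Context {R : realType} {S S' : infostr}.
Context {f : Obj S -> Obj S'} {fs : forall X, E S X -> E S' (f X)}.
Context {g : Obj S' -> Obj S} {gs : forall X', E S' X' -> E S (g X')}.
Context {gf : cancel f g}.
Hypothesis gsfsK : forall X (x : E S X),
  eq_rect _ (fun Z => (E S Z : Type)) (gs (f X) (fs X x)) X (gf X) = x.

Lemma sharp_inj X : injective (fs X).
Proof. by move=> x1 x2 eq_x; rewrite -(gsfsK _ x1) -(gsfsK _ x2) eq_x. Qed.

(* [g (f Y) = Y] holds only propositionally, hence the transport along an
   arbitrary object-indexed family [c]. *)
Lemma mpush_roundtrip {A : Type} (c : forall X, (E S X -> R) -> A) Y
    (P : E S Y -> R) :
  c (g (f Y)) (mpush gs (mpush fs P)) = c Y P.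
Proof.
have -> : mpush gs (mpush fs P) = fun z => \sum_(x | gs _ (fs Y x) == z) P x.
  by apply: funext => z; rewrite /mpush sum_preim_comp.
have transport Z (e : Z = Y) (k : E S Y -> E S Z) :
    (forall x, eq_rect Z (fun Z => (E S Z : Type)) (k x) Y e = x) ->
  c Z (fun z => \sum_(x | k x == z) P x) = c Y P.
  subst Z => /= kK; congr (c Y _); apply: funext => z.
  by rewrite (eq_bigl (pred1 z)) ?big_pred1_eq // => x; rewrite /= kK.
exact: transport (gsfsK Y).
Qed.

Lemma pullbackK : cancel (@pullback R _ _ _ gs) (@pullback R _ _ _ fs).
Proof.
move=> c; apply: functional_extensionality_dep => Y.
apply: funext => xs; apply: funext => P.
rewrite /pullback (mapK gf).
exact: (mpush_roundtrip (fun X => c X xs)).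
Qed.

End Roundtrip.

Section Pullback.
Context {R : realType} {S S' : infostr}.
Context {f : Obj S -> Obj S'} {fs : forall X, E S X -> E S' (f X)}.
Hypothesis f_morph : is_morphism fs.
Hypothesis fs_inj : forall X, injective (fs X).

Let f_arr : forall X Y, arr X Y -> arr (f X) (f Y).
Proof. by case: f_morph. Qed.

Let fs_surj : forall X (x' : E S' (f X)), exists x, fs X x = x'.
Proof. by case: f_morph. Qed.

Let fs_natural X Y (p : arr X Y) (p' : arr (f X) (f Y)) x :
  Emap p' (fs X x) = fs Y (Emap p x).
Proof. by case: f_morph => _ _ _ _; apply. Qed.

Lemma act_mpush (alpha : R) {X Y} (h : (E S' (f X) -> R) -> R) (P : E S X -> R) :
  arr X Y -> act alpha Y (fun P => h (mpush fs P)) P = act alpha (f Y) h (mpush fs P).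
Proof.
move=> pXY; rewrite /act.
case: pselect => [p|/(_ pXY)//]; case: pselect => [p'|/(_ (f_arr _ _ pXY))//].
rewrite [RHS](reindex (fs Y)) /=; last exact/onW_bij/inj_surj_bij.
apply: eq_bigr => y _.
by rewrite (marg_mpush (fs_natural _ _ p p')) mpushE // (cond_mpush (fs_natural _ _ p p')).
Qed.

Lemma delta_pullback (alpha : R) n (c : cochain R S') X xs (P : E S X -> R) :
  dom n.+1 X xs ->
  delta alpha n (pullback fs c) X xs P = pullback fs (delta alpha n c) (X:=X) xs P.
Proof.
move=> xs_dom; rewrite /delta /pullback; congr (_ + _ + _).
- case: xs xs_dom => [[]//|Y ys] [_ arr_xs] /=.
  exact: act_mpush _ (arr_xs 0%N isT).
- apply: eq_bigr => k _; congr (_ * c _ _ _).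
  by apply: (merge_at_map _ _ xs_dom); [case: f_morph | rewrite ltnS].
- by rewrite map_take.
Qed.

Context {Q : forall X, set (E S X -> R)} {Q' : forall X', set (E S' X' -> R)}.
Hypothesis QE : forall X P, Q X P <-> Q' (f X) (mpush fs P).

Lemma meas_on_mpush {X} (h : (E S' (f X) -> R) -> R) :
  meas_on R (Q' (f X)) h -> meas_on R (Q X) (fun P => h (mpush fs P)).
Proof.
move=> h_meas B mB.
have mpush_coord x' : exists x, forall P : E S X -> R, mpush fs P x' = P x.
  by have [x <-] := fs_surj _ x'; exists x => P; exact: mpushE.
have := coord_sigma_preimage mpush_coord (h_meas B mB).
by congr (<<s _ >> _); apply/seteqP; split => P /= [QP hP]; split => //; exact/QE.
Qed.

Lemma pullback_cochain n c : is_cochain Q' n c -> is_cochain Q n (pullback fs c).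
Proof.
move=> [c_meas c_loc]; split.
  move=> X xs xs_dom; apply: meas_on_mpush; apply: c_meas.
  exact: (dom_map f_arr xs_dom).
move=> X Y p xs xs_dom P QP.
rewrite /pullback (c_loc _ _ (f_arr _ _ p) _ (dom_map f_arr xs_dom)); last exact/QE.
by rewrite (marg_mpush (fs_natural _ _ p (f_arr _ _ p))).
Qed.

Lemma pullback_cocycle alpha n c :
  is_cocycle Q' alpha n c -> is_cocycle Q alpha n (pullback fs c).
Proof.
move=> [c_cochain c_closed]; split; first exact: pullback_cochain.
move=> X xs xs_dom P QP; rewrite delta_pullback //.
by apply: c_closed; [exact: dom_map | exact/QE].
Qed.

Lemma pullback_coboundary alpha n c :
  is_coboundary Q' alpha n c -> is_coboundary Q alpha n (pullback fs c).
Proof.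
case: n => [c0 | n [b [b_cochain c_db]]] /=.
  by move=> X xs xs_dom P QP; apply: c0; [exact: dom_map | exact/QE].
exists (pullback fs b); split; first exact: pullback_cochain.
move=> X xs xs_dom P QP; rewrite delta_pullback //.
by apply: c_db; [exact: dom_map | exact/QE].
Qed.

End Pullback.

Section ZeroCochain.
Context {R : realType} {S : infostr} {Q : forall X, set (E S X -> R)}.

Definition cochain0 : cochain R S := fun _ _ _ => 0.

Lemma meas_on_cst {T : finType} {A : set (T -> R)} (r : R) :
  <<s coord_sets R T >> A -> meas_on R A (cst r).
Proof.
move=> mA B _; rewrite preimage_cst.
by case: ifP => _; rewrite ?setIT ?setI0 //; exact: sigma_algebra0.
Qed.

Lemma cochain_measurable_dom n c X :
  is_cochain Q n c -> <<s coord_sets R (E S X) >> (Q X).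
Proof.
move=> [c_meas _].
have X_dom : dom n X (nseq n X).
  split=> [|i]; rewrite size_nseq // => i_lt.
  by rewrite nth_nseq i_lt; exact: arr_refl.
by have := c_meas X _ X_dom setT measurableT; rewrite preimage_setT setIT.
Qed.

Lemma delta_cochain0 alpha n X xs P : delta alpha n cochain0 X xs P = 0.
Proof.
rewrite /delta /act /cochain0 mulr0 addr0 big1 ?addr0 => [|k _]; last exact: mulr0.
by case: pselect => // p; apply: big1 => y _; rewrite mulr0.
Qed.

Lemma is_coboundary_csubxx alpha n c :
  is_cochain Q n c -> is_coboundary Q alpha n (csub c c).
Proof.
case: n => [|n] c_cochain /=; first by move=> X xs _ P _; rewrite /csub subrr.
exists cochain0; split.
  split=> // X xs _; apply: meas_on_cst; exact: cochain_measurable_dom c_cochain.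
by move=> X xs _ P _; rewrite /csub subrr delta_cochain0.
Qed.

End ZeroCochain.

Theorem corollary4p4 (R : realType) (S S' : infostr)
    (phi : Obj S -> Obj S') (phis : forall X, E S X -> E S' (phi X))
    (Q : forall X : Obj S, set (E S X -> R))
    (Q' : forall X' : Obj S', set (E S' X' -> R)) :
  is_iso phis ->
  prob_functor Q -> adapted Q ->
  prob_functor Q' -> adapted Q' ->
  (forall X : Obj S, Q' (phi X) = @mpush R _ _ _ phis X @` Q X) ->
  forall alpha : R, 0 < alpha ->
  forall n : nat,
    (* phi^* is well defined on H^n: cocycles to cocycles, coboundaries to coboundaries *)
    (forall f, is_cocycle Q' alpha n f -> is_cocycle Q alpha n (pullback phis f)) /\
    (forall f, is_cocycle Q' alpha n f -> is_coboundary Q' alpha n f ->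
        is_coboundary Q alpha n (pullback phis f)) /\
    (* injective on H^n *)
    (forall f, is_cocycle Q' alpha n f ->
        is_coboundary Q alpha n (pullback phis f) -> is_coboundary Q' alpha n f) /\
    (* surjective on H^n *)
    (forall g, is_cocycle Q alpha n g ->
        exists f, is_cocycle Q' alpha n f /\
          is_coboundary Q alpha n (csub g (pullback phis f))).
Proof.
move=> [phi_morph [psi [psis [psi_morph [? [? [phisK psisK]]]]]]] _ _ _ _ QE alpha _ n.
have phis_inj := sharp_inj phisK.
have psis_inj := sharp_inj psisK.
have QphiE X P : Q X P <-> Q' (phi X) (mpush phis P).
  exact: in_image_mpush (phis_inj X) (QE X) P.
have QpsiE X' P' : Q' X' P' <-> Q (psi X') (mpush psis P').
  have <- : Q' (phi (psi X')) (mpush phis (mpush psis P')) = Q' X' P' :=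
    mpush_roundtrip psisK (fun X' P' => Q' X' P') X' P'.
  by split => /QphiE.
split; first exact: (pullback_cocycle phi_morph phis_inj QphiE).
split; first by move=> f _; exact: (pullback_coboundary phi_morph phis_inj QphiE).
split.
  move=> f _ /(pullback_coboundary psi_morph psis_inj QpsiE alpha n).
  by rewrite (pullbackK psisK).
move=> g g_cocycle; exists (pullback psis g); split.
  exact: (pullback_cocycle psi_morph psis_inj QpsiE).
by rewrite (pullbackK phisK); apply: is_coboundary_csubxx; case: g_cocycle.
Qed.
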